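(* Let $\mathcal{G}=\langle S,A,T,s_0,F\rangle$ be a two-player turn-based deterministic reachability game. For every subset $Z\subseteq\mathrm{Win}_2(\mathcal{G},F)\setminus F$, we have $\mathrm{DSWin}_1(Z,\emptyset)\subseteq\mathrm{DSWin}_1(\emptyset,Z)$.
   Context: A two-player turn-based deterministic reachability game is a tuple $\mathcal{G}=\langle S,A,T,s_0,F\rangle$: $S$ finite, partitioned into P1 states $S_1$ and P2 states $S_2$; $A=A_1\cup A_2$ (P1 and P2 actions); $T:(S_1\times A_1)\cup(S_2\times A_2)\to S$ deterministic, possibly partial ($a$ enabled at $s$ iff $T(s,a)$ defined; every state has an enabled action); $s_0$ initial; $F\subseteq S$ a set of sink states (P2's goal). For a target $R\subseteq S$: $Z_0=R$, $Z_{k+1}=Z_k\cup\{s\in S_1:T(s,a)\in Z_k\ \forall\text{ enabled }a\}\cup\{s\in S_2:T(s,a)\in Z_k\text{ for some enabled }a\}$; $\mathrm{Win}_2(\mathcal{G},R)=\bigcup_kZ_k$; $\mathrm{rank}_{\mathcal{G},R}(s)=\min\{k:s\in Z_k\}$ ($\infty$ if none). For disjoint $X,Y\subseteq\mathrm{Win}_2(\mathcal{G},F)\setminus F$ (traps $X$, fake targets $Y$): the true game $\mathcal{G}^1_{X,Y}$ has states $S$, transitions $T_{X,Y}(q,a)=T(q,a)$ if $q\notin X\cup Y$ and $T_{X,Y}(q,a)=q$ if $q\in X\cup Y$; P2's perceptual game $\mathcal{G}^2_{X,Y}$ has transitions $T$ and goal $F\cup Y$, with $\mathrm{rank}_{\mathcal{G}^2_{X,Y}}:=\mathrm{rank}_{\mathcal{G},F\cup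 Y}$. Subjectively rationalizable actions: for $q\in S_2\cap\mathrm{Win}_2(\mathcal{G},F)\setminus(F\cup Y)$, $\mathsf{SRActs}_{X,Y}(q)=\{a\text{ enabled}:\mathrm{rank}_{\mathcal{G}^2_{X,Y}}(T(q,a))<\mathrm{rank}_{\mathcal{G}^2_{X,Y}}(q)\}$; at every other state, all enabled actions. A memoryless deterministic strategy of either player is subjectively rationalizable if it picks an action in $\mathsf{SRActs}_{X,Y}(q)$ at each of that player's states $q$. A memoryless deterministic P1 strategy $\pi_1$ is stealthy deceptive sure winning at $s$ if it is subjectively rationalizable and, for every subjectively rationalizable memoryless deterministic P2 strategy $\pi_2$, every path from $s$ generated by $(\pi_1,\pi_2)$ in the true game $\mathcal{G}^1_{X,Y}$ visits $X\cup Y$ within finitely many steps. $\mathrm{DSWin}_1(X,Y)$ is the set of states at which P1 has a stealthy deceptive sure winning strategy. *)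

From mathcomp Require Import all_boot.
From Stdlib Require Import ClassicalEpsilon.
Set Implicit Arguments. Unset Strict Implicit. Unset Printing Implicit Defensive.

Section Game.
(* S : states; p1 s = true iff s is a P1 state (S_1), otherwise s in S_2.
   A : actions; A1 a = true iff a is a P1 action.
   T : partial deterministic transition function (None = not enabled). *)
Variables (S A : finType) (p1 : pred S) (A1 : pred A) (T : S -> A -> option S).

Definition enabled (s : S) (a : A) : bool := T s a != None.

Definition is_game (F : {set S}) : Prop :=
  [/\ (forall s, exists a, enabled s a),
      (forall s a, enabled s a -> p1 s = A1 a)
    & (forall f a t, f \in F -> T f a = Some t -> t = f)].

Definition succ_in (s : S) (a : A) (Z : {set S}) : bool :=
  if T s a is Some t then t \in Z else false.

Definition attr_step (Z : {set S}) : {set S} :=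
  Z :|: [set s | p1 s & [forall a, enabled s a ==> succ_in s a Z]]
    :|: [set s | ~~ p1 s & [exists a, succ_in s a Z]].

Definition Zk (R : {set S}) (k : nat) : {set S} := iter k attr_step R.

Definition win2 (R : {set S}) (s : S) : Prop := exists k, s \in Zk R k.

(* rank_{G,R}(s); None stands for infinity *)
Definition rank (R : {set S}) (s : S) : option nat :=
  match excluded_middle_informative (exists k, s \in Zk R k) with
  | left H => Some (ex_minn H)
  | right _ => None
  end.

Definition rank_lt (x y : option nat) : Prop :=
  match x, y with
  | Some m, Some n => (m < n)%N
  | Some _, None => True
  | None, _ => False
  end.

(* a \in SRActs_{X,Y}(q) (does not depend on X); F is P2's goal *)
Definition SRAct (F Y : {set S}) (q : S) (a : A) : Prop :=
  enabled q a /\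
  ((~~ p1 q /\ win2 F q /\ q \notin F :|: Y) ->
     match T q a with
     | Some t => rank_lt (rank (F :|: Y) t) (rank (F :|: Y) q)
     | None => False
     end).

(* memoryless deterministic strategies: S -> A, only relevant at own states *)
Definition sr1 (F Y : {set S}) (pi1 : S -> A) : Prop :=
  forall q, p1 q -> SRAct F Y q (pi1 q).
Definition sr2 (F Y : {set S}) (pi2 : S -> A) : Prop :=
  forall q, ~~ p1 q -> SRAct F Y q (pi2 q).

Definition true_step (X Y : {set S}) (q : S) (a : A) : option S :=
  if q \in X :|: Y then Some q else T q a.

Definition play (X Y : {set S}) (pi1 pi2 : S -> A) (s : S) (p : nat -> S) : Prop :=
  p 0 = s /\
  forall n, true_step X Y (p n) (if p1 (p n) then pi1 (p n) else pi2 (p n))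
            = Some (p n.+1).

Definition dswin1 (F X Y : {set S}) (s : S) : Prop :=
  exists pi1, sr1 F Y pi1 /\
    forall pi2, sr2 F Y pi2 ->
      forall p, play X Y pi1 pi2 s p -> exists n, p n \in X :|: Y.

End Game.

From mathcomp Require Import all_boot.
From Stdlib Require Import ClassicalEpsilon Classical.
Set Implicit Arguments. Unset Strict Implicit. Unset Printing Implicit Defensive.

(* Both deceptions induce the same true game (the states of Z are absorbing) and
   the same constraint on P1; they differ only in P2's rationalizable moves, which
   decrease the rank towards F when Z are traps and the rank towards F :|: Z when
   Z are fake targets.  Since Z lies in Win_2(F), both ranks are finite exactly
   on Win_2(F).
   Let E be the set of states from which P2, moving rationally for the fake
   targets, forces F while avoiding Z.  P1 modifies her winning strategy so that
   on Win_2(F) \ E she leaves E whenever she can, which at her states outside Z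
   she always can.
   A play entering Win_2(F) \ E then stays there with decreasing rank towards
   F :|: Z, so it ends in Z, as F is inside E.  A play that never enters
   Win_2(F) \ E is shadowed by a play of the original strategy against a P2
   strategy rational for the traps: it copies P2 outside Win_2(F), and on E it
   takes moves staying in E, where the two ranks coincide.  The shadow play
   reaches Z, which E avoids, so at that moment it still coincides with the
   original play. *)

Section PickOr.
Variables (A : Type) (d : A) (P : A -> Prop).

Definition pick_or : A :=
  if excluded_middle_informative (exists a, P a) is left exP
  then proj1_sig (constructive_indefinite_description _ exP) else d.

Lemma pick_orP : (exists a, P a) -> P pick_or.
Proof.
by rewrite /pick_or; case: excluded_middle_informative => // exP _; apply: proj2_sig.
Qed.

Lemma pick_or_default : ~ (exists a, P a) -> pick_or = d.
Proof. by rewrite /pick_or; case: excluded_middle_informative. Qed.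

End PickOr.

Section Attractor.
Variables (S A : finType) (p1 : pred S) (T : S -> A -> option S).
Implicit Types (R : {set S}) (q t : S) (a : A).

Local Notation attr_step := (attr_step p1 T).
Local Notation Zk := (Zk p1 T).
Local Notation win2 := (win2 p1 T).
Local Notation rank := (rank p1 T).

Lemma attr_step_sub R : R \subset attr_step R.
Proof. by rewrite /attr_step -setUA subsetUl. Qed.

Lemma attr_step_p1 R q :
  p1 q -> (forall a t, T q a = Some t -> t \in R) -> q \in attr_step R.
Proof.
move=> Pq succR; rewrite /attr_step !inE Pq /=; apply/orP; left; apply/orP; right.
apply/forallP => a; apply/implyP; rewrite /enabled /succ_in.
by case Tqa: (T q a) => [t|] // _; apply: succR Tqa.
Qed.

Lemma attr_step_p2 R q a t :
  ~~ p1 q -> T q a = Some t -> t \in R -> q \in attr_step R.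
Proof.
move=> Pq Tqa tR; rewrite /attr_step !inE Pq /=; apply/orP; right.
by apply/existsP; exists a; rewrite /succ_in Tqa.
Qed.

Lemma attr_step_mono R R' : R \subset R' -> attr_step R \subset attr_step R'.
Proof.
move=> sRR'; apply/subsetP => q.
case/setUP => [/setUP[qR | ] | ].
- by apply: (subsetP (attr_step_sub R')); apply: (subsetP sRR').
- rewrite inE => /andP[Pq /forallP succR]; apply: attr_step_p1 => // a t Tqa.
  by move/implyP: (succR a); rewrite /enabled /succ_in Tqa => /(_ isT)/(subsetP sRR').
- rewrite inE => /andP[Pq /existsP[a]]; rewrite /succ_in.
  by case Tqa: (T q a) => [t|] // /(subsetP sRR'); apply: attr_step_p2 Pq Tqa.
Qed.

Lemma leq_Zk R k m : k <= m -> Zk R k \subset Zk R m.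
Proof.
move=> /subnK <-; elim: (m - k) => [|n IH] //=.
exact: subset_trans IH (attr_step_sub _).
Qed.

Lemma subset_Zk R R' k : R \subset R' -> Zk R k \subset Zk R' k.
Proof. by move=> sRR'; elim: k => //= k; apply: attr_step_mono. Qed.

Lemma ZkD R k m : Zk R (m + k) = Zk (Zk R k) m.
Proof. exact: iterD. Qed.

Lemma rank_Some R q k :
  rank R q = Some k -> q \in Zk R k /\ forall j, q \in Zk R j -> k <= j.
Proof.
rewrite /rank; case: excluded_middle_informative => // exk [<-].
by case: ex_minnP.
Qed.

Lemma rank_le R q m : q \in Zk R m -> exists2 k, rank R q = Some k & k <= m.
Proof.
move=> qm; rewrite /rank; case: excluded_middle_informative => [exk | []]; last by exists m.
by exists (ex_minn exk); case: ex_minnP => // k _; apply.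
Qed.

Lemma win2_rank R q : win2 R q <-> exists k, rank R q = Some k.
Proof.
by split=> [[m /rank_le[k rk _]] | [k /rank_Some[qk _]]]; exists k.
Qed.

Lemma rank_eq0 R q : rank R q = Some 0 <-> q \in R.
Proof.
split=> [/rank_Some[] // | qR].
by have [k -> ] := rank_le (qR : q \in Zk R 0); rewrite leqn0 => /eqP->.
Qed.

Lemma rank_subset_eq R R' q k :
  R \subset R' -> rank R' q = Some k -> q \in Zk R k -> rank R q = Some k.
Proof.
move=> sRR' /rank_Some[_ minR'] qk; have [j rj jk] := rank_le qk.
have [/(subsetP (subset_Zk j sRR'))/minR' kj _] := rank_Some rj.
by rewrite rj; congr Some; apply/eqP; rewrite eqn_leq jk.
Qed.

Lemma rankS_attr_step R q k :
  rank R q = Some k.+1 -> q \in attr_step (Zk R k) /\ q \notin Zk R k.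
Proof. by case/rank_Some => qk min; split=> //; apply/negP => /min; rewrite ltnn. Qed.

Lemma rank_lt_p1 R q a t :
  p1 q -> win2 R q -> q \notin R -> T q a = Some t -> rank_lt (rank R t) (rank R q).
Proof.
move=> Pq /win2_rank[[|k] rq] qR Tqa; first by case/negP: qR; apply/rank_eq0.
have [] := rankS_attr_step rq; rewrite {1}/attr_step !inE Pq /= => + /negbTE qk.
rewrite qk /= orbF => /forallP/(_ a); rewrite /enabled /succ_in Tqa /= => tk.
by have [i -> ik] := rank_le tk; rewrite rq.
Qed.

Lemma rank_lt_p2 R q :
  ~~ p1 q -> win2 R q -> q \notin R ->
  exists a t, T q a = Some t /\ rank_lt (rank R t) (rank R q).
Proof.
move=> Pq /win2_rank[[|k] rq] qR; first by case/negP: qR; apply/rank_eq0.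
have [] := rankS_attr_step rq; rewrite {1}/attr_step !inE (negbTE Pq) /= => + /negbTE qk.
rewrite qk /= => /existsP[a]; rewrite /succ_in; case Tqa: (T q a) => [t|] // tk.
by exists a, t; split=> //; have [i -> ik] := rank_le tk; rewrite rq.
Qed.

End Attractor.

Arguments leq_Zk {S A p1 T R k m}.
Arguments subset_Zk {S A p1 T R R'} k.
Arguments win2_rank {S A p1 T R q}.
Arguments rank_eq0 {S A} p1 T {R q}.

Section Plays.
Variables (S A : finType) (p1 : pred S) (T : S -> A -> option S) (X Y : {set S}).
Variables (pi1 pi2 : S -> A).

Lemma play_succ s p n :
  play p1 T X Y pi1 pi2 s p -> p n \notin X :|: Y ->
  T (p n) (if p1 (p n) then pi1 (p n) else pi2 (p n)) = Some (p n.+1).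
Proof. by case=> _ /(_ n); rewrite /true_step => + /negbTE pnXY; rewrite pnXY. Qed.

Lemma play_exists s :
  (forall q, enabled T q (if p1 q then pi1 q else pi2 q)) ->
  exists p, play p1 T X Y pi1 pi2 s p.
Proof.
move=> en; pose next q := odflt q (true_step T X Y q (if p1 q then pi1 q else pi2 q)).
exists (fun n => iter n next s); split=> // n /=.
rewrite /next /true_step; case: ifP => // _.
by move: (en (iter n next s)); rewrite /enabled; case: (T _ _).
Qed.

End Plays.

Section FakeTargets.
Variables (S A : finType) (p1 : pred S) (T : S -> A -> option S) (F Z : {set S}).
Hypothesis F_sink : forall f a t, f \in F -> T f a = Some t -> t = f.
Hypothesis Z_win2 : forall z, z \in Z -> win2 p1 T F z.
Hypothesis Z_notF : forall z, z \in Z -> z \notin F.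
Implicit Types (q t : S) (a : A).

Local Notation win2 := (win2 p1 T).
Local Notation rank := (rank p1 T).
Local Notation Zk := (Zk p1 T).

Inductive sr_attr : S -> Prop :=
| sr_attr_F q : q \in F -> sr_attr q
| sr_attr_p1 q : q \notin Z -> win2 F q -> p1 q ->
    (forall a t, T q a = Some t -> sr_attr t) -> sr_attr q
| sr_attr_p2 q a t : q \notin Z -> win2 F q -> ~~ p1 q -> T q a = Some t ->
    rank_lt (rank (F :|: Z) t) (rank (F :|: Z) q) -> sr_attr t -> sr_attr q.

Lemma win2_setUr q : win2 (F :|: Z) q <-> win2 F q.
Proof.
split=> [[m qm] | [m qm]]; last by exists m; apply: (subsetP (subset_Zk m (subsetUl F Z))).
pose K := \max_(z in Z) odflt 0 (rank F z).
have FZ_K : F :|: Z \subset Zk F K.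
  apply/subsetP => z /setUP[zF | zZ]; first exact: (subsetP (leq_Zk (leq0n K))).
  have [k rk] := win2_rank.1 (Z_win2 zZ).
  apply: (subsetP (leq_Zk _)) (rank_Some rk).1.
  by rewrite /K (bigmax_sup z) // rk.
by exists (m + K); rewrite ZkD; apply: (subsetP (subset_Zk m FZ_K)).
Qed.

Lemma sr_attr_notin q : sr_attr q -> q \notin Z.
Proof. by case=> // {}q qF; apply/negP => /Z_notF; rewrite qF. Qed.

Lemma sr_attr_win2 q : sr_attr q -> win2 F q.
Proof. by case=> // {}q qF; exists 0. Qed.

Lemma sr_attr_Zk q : sr_attr q -> exists j, rank (F :|: Z) q = Some j /\ q \in Zk F j.
Proof.
elim=> {q} [q qF | q qZ Wq Pq _ IH | q a t qZ Wq Pq Tqa ltq _ [i [rt ti]]].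
- by exists 0; split=> //; apply/rank_eq0; rewrite inE qF.
- have WFZq := (win2_setUr q).2 Wq; have [j rq] := win2_rank.1 WFZq.
  exists j; split=> //; case: j rq => [|j] rq.
    by move/rank_eq0: rq; rewrite inE (negbTE qZ) orbF.
  have qFZ : q \notin F :|: Z by apply/negP => /(rank_eq0 p1 T); rewrite rq.
  apply: attr_step_p1 => // b u Tqb; have [i [ru ui]] := IH b u Tqb.
  have := rank_lt_p1 Pq WFZq qFZ Tqb; rewrite ru rq /= ltnS => ij.
  exact: (subsetP (leq_Zk ij)).
- have [j rq] := win2_rank.1 ((win2_setUr q).2 Wq).
  move: ltq; rewrite rt rq /= => ij; exists j; split=> //.
  case: j ij rq => [|j] // ij _; rewrite ltnS in ij; apply: (attr_step_p2 Pq Tqa).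
  exact: (subsetP (leq_Zk ij)).
Qed.

Lemma sr_attr_rank q : sr_attr q -> rank F q = rank (F :|: Z) q.
Proof.
by move=> /sr_attr_Zk[j [rq qj]]; rewrite rq; apply: rank_subset_eq (subsetUl F Z) rq qj.
Qed.

Lemma sr_attr_succ_p1 q a t :
  sr_attr q -> p1 q -> q \notin F -> T q a = Some t -> sr_attr t.
Proof. by case=> {q} [q -> | q _ _ _ succE _ _ /succE | q b u _ _ /negbTE->]. Qed.

Lemma sr_attr_succ_p2 q :
  sr_attr q -> ~~ p1 q -> q \notin F ->
  exists a t, T q a = Some t /\ rank_lt (rank F t) (rank F q) /\ sr_attr t.
Proof.
move=> Eq; move: (sr_attr_rank Eq).
case: Eq => {q} [q -> | q _ _ -> _ | q a t _ _ _ Tqa ltq Et rq] //.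
by exists a, t; rewrite (sr_attr_rank Et) rq.
Qed.

Lemma not_sr_attr_succ_p1 q :
  p1 q -> win2 F q -> q \notin Z -> ~ sr_attr q ->
  exists a t, T q a = Some t /\ ~ sr_attr t.
Proof.
move=> Pq Wq qZ nEq; apply: NNPP => noesc; apply/nEq/sr_attr_p1 => // a t Tqa.
by apply: NNPP => nEt; apply: noesc; exists a, t.
Qed.

Section Strategies.
Variables (pi1 pi2 : S -> A).
Hypothesis pi1_enabled : forall q, p1 q -> enabled T q (pi1 q).
Hypothesis pi2_sr : sr2 p1 T F Z pi2.

Definition escape_move q a : Prop :=
  win2 F q /\ ~ sr_attr q /\ exists t, T q a = Some t /\ ~ sr_attr t.

Definition escape q : A := pick_or (pi1 q) (escape_move q).

Lemma escape_default q : ~ win2 F q -> escape q = pi1 q.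
Proof. by move=> nWq; apply: pick_or_default => -[a []]. Qed.

Lemma escape_sr1 Y : sr1 p1 T F Y escape.
Proof.
move=> q Pq; split; last by rewrite Pq; case.
have [/(pick_orP (pi1 q))[_ [_ [t [Tqa _]]]] | /(pick_or_default (pi1 q)) eq_pi1] :=
  classic (exists a, escape_move q a).
  by rewrite /enabled /escape Tqa.
by rewrite /escape eq_pi1; apply: pi1_enabled.
Qed.

Lemma escape_avoids q :
  p1 q -> win2 F q -> q \notin Z -> ~ sr_attr q ->
  exists t, T q (escape q) = Some t /\ ~ sr_attr t.
Proof.
move=> Pq Wq qZ nEq; have [a [t [Tqa nEt]]] := not_sr_attr_succ_p1 Pq Wq qZ nEq.
have /(pick_orP (pi1 q))[_ [_ //]] : exists a, escape_move q a.
by exists a; do 2!split=> //; exists t.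
Qed.

Lemma escape_reaches_Z s p n :
  play p1 T set0 Z escape pi2 s p -> win2 F (p n) -> ~ sr_attr (p n) ->
  exists m, p m \in Z.
Proof.
move=> pl Wn; have [k rk] := win2_rank.1 ((win2_setUr (p n)).2 Wn).
elim/ltn_ind: k n rk Wn => k IH n rk Wn nEn.
have [pnZ | pnZ] := boolP (p n \in Z); first by exists n.
have pnF : p n \notin F by apply/negP => /sr_attr_F.
have pnFZ : p n \notin F :|: Z by rewrite inE negb_or pnF.
have WFZn := (win2_setUr (p n)).2 Wn.
have step := play_succ pl (n := n); rewrite set0U in step; move/(_ pnZ) in step.
suff [ltr nEt] :
    rank_lt (rank (F :|: Z) (p n.+1)) (rank (F :|: Z) (p n)) /\ ~ sr_attr (p n.+1).
  move: ltr; rewrite rk; case rt: (rank _ (p n.+1)) => [i|] //= ik.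
  have Wn1 : win2 F (p n.+1) by apply/(win2_setUr _).1/win2_rank; exists i.
  exact: IH ik n.+1 rt Wn1 nEt.
case: ifP step => Pn step.
- have [t [Tn nEt]] := escape_avoids Pn Wn pnZ nEn.
  rewrite Tn in step; case: step => <-; split=> //.
  exact: rank_lt_p1 Pn WFZn pnFZ Tn.
- have := (pi2_sr (negbT Pn)).2 (conj (negbT Pn) (conj Wn pnFZ)).
  rewrite step => ltr; split=> // Et; apply: nEn.
  exact: sr_attr_p2 pnZ Wn (negbT Pn) step ltr Et.
Qed.

Definition mimic_move q a : Prop :=
  win2 F q /\ q \notin F /\
  exists t, T q a = Some t /\ rank_lt (rank F t) (rank F q) /\ (sr_attr q -> sr_attr t).

Definition mimic q : A := pick_or (pi2 q) (mimic_move q).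

Lemma mimic_move_exists q : ~~ p1 q -> win2 F q -> q \notin F -> exists a, mimic_move q a.
Proof.
move=> Pq Wq qF; have [Eq | nEq] := classic (sr_attr q).
  have [a [t [Tqa [ltr Et]]]] := sr_attr_succ_p2 Eq Pq qF.
  by exists a; do 2!split=> //; exists t.
have [a [t [Tqa ltr]]] := rank_lt_p2 Pq Wq qF.
by exists a; do 2!split=> //; exists t; do 2!split=> // /nEq.
Qed.

Lemma mimic_default q : ~ win2 F q -> mimic q = pi2 q.
Proof. by move=> nWq; apply: pick_or_default => -[a []]. Qed.

Lemma mimic_enabled q : ~~ p1 q -> enabled T q (mimic q).
Proof.
move=> Pq; have [/(pick_orP (pi2 q))[_ [_ [t [Tqa _]]]] | /(pick_or_default (pi2 q)) eq_pi2] :=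
  classic (exists a, mimic_move q a).
  by rewrite /enabled /mimic Tqa.
by rewrite /mimic eq_pi2; apply: (pi2_sr Pq).1.
Qed.

Lemma mimic_sr2 : sr2 p1 T F set0 mimic.
Proof.
move=> q Pq; split; first exact: mimic_enabled.
rewrite setU0 => -[_ [Wq qF]].
have /(pick_orP (pi2 q))[_ [_ [t [Tqa [ltr _]]]]] := mimic_move_exists Pq Wq qF.
by rewrite /mimic Tqa.
Qed.

Lemma sr_attr_closed q t :
  sr_attr q -> T q (if p1 q then pi1 q else mimic q) = Some t -> sr_attr t.
Proof.
move=> Eq; have [qF /F_sink-> // | qF] := boolP (q \in F).
case: ifP => [Pq | /negbT Pq] Tq; first exact: sr_attr_succ_p1 Eq Pq qF Tq.
have /(pick_orP (pi2 q))[_ [_ [u [Tqu [_ Eu]]]]] := mimic_move_exists Pq (sr_attr_win2 Eq) qF.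
by move: Tq; rewrite /mimic Tqu => -[<-]; apply: Eu.
Qed.

Lemma mimic_shadows s p pp :
  play p1 T set0 Z escape pi2 s p -> play p1 T Z set0 pi1 mimic s pp ->
  (forall n, p n \notin Z) -> (forall n, win2 F (p n) -> sr_attr (p n)) ->
  forall n, (pp n = p n /\ ~ win2 F (p n)) \/ sr_attr (pp n).
Proof.
move=> pl ppl pZ WE; elim=> [|n [[ppn nWn] | En]].
- have [/WE E0 | nW0] := classic (win2 F (p 0)); [right | left];
    by rewrite ppl.1 -pl.1.
- have ppn1 : pp n.+1 = p n.+1.
    have := play_succ ppl (n := n); rewrite ppn setU0 mimic_default //.
    have := play_succ pl (n := n); rewrite set0U escape_default //.
    by move=> /(_ (pZ n)) -> /(_ (pZ n)) [->].
  by have [/WE | ] := classic (win2 F (p n.+1)); [right | left]; rewrite ppn1.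
- have ppnZ : pp n \notin Z :|: set0 by rewrite setU0; apply: sr_attr_notin En.
  by right; apply: sr_attr_closed En (play_succ ppl ppnZ).
Qed.

Lemma escape_wins s p :
  (forall pi2', sr2 p1 T F set0 pi2' ->
     forall pp, play p1 T Z set0 pi1 pi2' s pp -> exists n, pp n \in Z :|: set0) ->
  play p1 T set0 Z escape pi2 s p -> exists n, p n \in Z.
Proof.
move=> pi1_wins pl; apply: NNPP => nZ.
have pZ n : p n \notin Z by apply/negP => pnZ; apply: nZ; exists n.
have [[n [Wn nEn]] | noesc] := classic (exists n, win2 F (p n) /\ ~ sr_attr (p n)).
  exact/nZ/(escape_reaches_Z pl Wn nEn).
have WE n : win2 F (p n) -> sr_attr (p n).
  by move=> Wn; apply: NNPP => nEn; apply: noesc; exists n.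
have [pp ppl] : exists pp, play p1 T Z set0 pi1 mimic s pp.
  by apply: play_exists => q; case: ifP => [/pi1_enabled | /negbT/mimic_enabled].
have [n] := pi1_wins mimic mimic_sr2 pp ppl; rewrite setU0.
have [[-> _] | En] := mimic_shadows pl ppl pZ WE n; first by rewrite (negbTE (pZ n)).
by rewrite (negbTE (sr_attr_notin En)).
Qed.

End Strategies.
End FakeTargets.

Theorem theorem2 (S A : finType) (p1 : pred S) (A1 : pred A)
  (T : S -> A -> option S) (s0 : S) (F : {set S}) :
  is_game p1 A1 T F ->
  forall Z : {set S},
    (forall s, s \in Z -> win2 p1 T F s /\ s \notin F) ->
    forall s, dswin1 p1 T F Z set0 s -> dswin1 p1 T F set0 Z s.
Proof.
move=> [_ _ F_sink] Z HZ s [pi1 [pi1_sr pi1_wins]].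
have Z_win2 z : z \in Z -> win2 p1 T F z by case/HZ.
have Z_notF z : z \in Z -> z \notin F by case/HZ.
have pi1_enabled q : p1 q -> enabled T q (pi1 q) by move=> /pi1_sr[].
exists (escape p1 T F Z pi1); split; first exact: escape_sr1.
move=> pi2 pi2_sr p pl; rewrite set0U.
exact: (escape_wins F_sink Z_win2 Z_notF pi1_enabled pi2_sr pi1_wins pl).
Qed.
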